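(* Let $S\subseteq\mathbb N^d$ be a good semigroup, $E\subsetneq S$ a proper good ideal, and $A=S\setminus E=\bigcup_{i=1}^NA_i$ its partition into levels. Suppose that for every $i=1,\dots,N-1$ and every $\boldsymbol\alpha\in A_i$ there exists $\boldsymbol\beta\in A_{i+1}$ with $\boldsymbol\beta\gg\boldsymbol\alpha$. Then $A$ is well-behaved.
   Context: Notation: on $\mathbb{Z}^d$, $\le$ componentwise, $\boldsymbol\alpha\ll\boldsymbol\beta$ (also written $\boldsymbol\beta\gg\boldsymbol\alpha$) means $\alpha_i<\beta_i$ for all $i$, $\boldsymbol\alpha\le\le\boldsymbol\beta$ means $\boldsymbol\alpha=\boldsymbol\beta$ or $\boldsymbol\alpha\ll\boldsymbol\beta$, $\wedge$ componentwise minimum, $I=\{1,\dots,d\}$. For $T\subseteq\mathbb Z^d$: $\Delta^T_F(\boldsymbol\alpha)=\{\boldsymbol\beta\in T:\beta_i=\alpha_i\ (i\in F),\ \beta_j>\alpha_j\ (j\notin F)\}$, $\widetilde\Delta^T_F(\boldsymbol\alpha)=\{\boldsymbol\beta\in T:\beta_i=\alpha_i\ (i\in F),\ \beta_j\ge\alpha_j\ (j\notin F)\}\setminus\{\boldsymbol\alpha\}$. A good semigroup is a submonoid $S$ of $(\mathbb{N}^d,+)$ closed under $\wedge$ (G1), satisfying (G2): if $\boldsymbol\alpha\neq\boldsymbol\beta\in S$ and $\alpha_i=\beta_i$, there is $\boldsymbol\epsilon\in S$ with $\epsilon_i>\alpha_i$, $\epsilon_j\ge\min\{\alpha_j,\beta_j\}$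 for $j\ne i$, with equality if $\alpha_j\ne\beta_j$; and (G3): $\boldsymbol c+\mathbb N^d\subseteq S$ for some $\boldsymbol c$. A good ideal is $E\subseteq S$ with $E+S\subseteq E$ satisfying (G1)–(G3). Complete infimum: $\boldsymbol\alpha\in B\subseteq S$ is a complete infimum of $\boldsymbol\beta^{(1)},\dots,\boldsymbol\beta^{(r)}\in B$ ($r\ge2$) if $\boldsymbol\beta^{(j)}\in\Delta^S_{F_j}(\boldsymbol\alpha)$ with $\emptyset\ne F_j\subsetneq I$, $\boldsymbol\beta^{(j)}\wedge\boldsymbol\beta^{(k)}=\boldsymbol\alpha$ ($j\ne k$), $\bigcap F_j=\emptyset$. Levels: $B^{(1)}$ = maximal elements of $A$ for $\le\le$, $C^{(1)}$ = those that are complete infima of $r$ elements of $B^{(1)}$ ($1<r\le d$), $D^{(1)}=B^{(1)}\setminus C^{(1)}$; inductively for $A\setminus\bigcup_{j<i}D^{(j)}$; $A=\bigsqcup_{i=1}^ND^{(i)}$, $A_i=D^{(N+1-i)}$. Well-behaved: $A$ is well-behaved if whenever $\boldsymbol\alpha\in S$ is a complete infimum (in $S$) of $\boldsymbol\beta^{(1)},\dots,\boldsymbol\beta^{(r)}$ with, for each $j$, $\boldsymbol\beta^{(j)}\in\widetilde\Delta^S_{G_j}(\boldsymbol\alpha)$ and $\widetilde\Delta^S_{G_j}(\boldsymbol\alpha)\subseteq A$, then $\boldsymbol\alpha\in E$. *)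

From mathcomp Require Import all_boot.
Set Implicit Arguments. Unset Strict Implicit. Unset Printing Implicit Defensive.

Definition vec (d : nat) := {ffun 'I_d -> nat}.
Definition vset (d : nat) := vec d -> Prop.

Section GoodSemigroups.
Variable d : nat.
Implicit Types (a b c e : vec d) (T S E A B R : vset d).

Definition vzero : vec d := [ffun _ => 0].
Definition vadd a b : vec d := [ffun i => a i + b i].
Definition vmeet a b : vec d := [ffun i => minn (a i) (b i)].

Definition vle a b := forall i, a i <= b i.
Definition vll a b := forall i, a i < b i.
Definition vlele a b := a = b \/ vll a b.

Definition G1 T := forall a b, T a -> T b -> T (vmeet a b).
Definition G2 T := forall a b, T a -> T b -> a <> b -> forall i, a i = b i ->
  exists e, T e /\ a i < e i /\
    forall j, j <> i -> minn (a j) (b j) <= e j /\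
                        (a j <> b j -> e j = minn (a j) (b j)).
Definition G3 T := exists c, forall g, vle c g -> T g.

Definition good_semigroup S :=
  [/\ S vzero, (forall a b, S a -> S b -> S (vadd a b)), G1 S, G2 S & G3 S].

Definition good_ideal S E :=
  [/\ (forall e, E e -> S e), (forall e s, E e -> S s -> E (vadd e s)),
      G1 E, G2 E & G3 E].

Definition Delta T (F : {set 'I_d}) a : vset d := fun b =>
  T b /\ (forall i, i \in F -> b i = a i) /\ (forall j, j \notin F -> a j < b j).
Definition Deltat T (F : {set 'I_d}) a : vset d := fun b =>
  [/\ T b, (forall i, i \in F -> b i = a i), (forall j, j \notin F -> a j <= b j)
    & b <> a].

Definition complete_infimum S B a {r : nat} (bs : 'I_r -> vec d) :=
  [/\ 2 <= r, B a, (forall j, B (bs j)) &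
    exists F : 'I_r -> {set 'I_d},
      [/\ (forall j, F j != set0 /\ F j != setT),
          (forall j, Delta S (F j) a (bs j)),
          (forall j k, j <> k -> vmeet (bs j) (bs k) = a) &
          \bigcap_(j < r) F j = set0]].

Definition lvB R : vset d := fun a => R a /\ ~ (exists b, R b /\ vlele a b /\ b <> a).
Definition lvC S R : vset d := fun a => lvB R a /\
  exists r (bs : 'I_r -> vec d), 1 < r <= d /\ complete_infimum S (lvB R) a bs.
Definition lvD S R : vset d := fun a => lvB R a /\ ~ lvC S R a.

Fixpoint lvRem S A (k : nat) : vset d :=
  match k with
  | 0 => A
  | k.+1 => fun a => lvRem S A k a /\ ~ lvD S (lvRem S A k) a
  end.

(* D^(k+1) (0-indexed here: Dlevel 0 = D^(1)) *)
Definition Dlevel S A k : vset d := lvD S (lvRem S A k).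

Definition num_levels S A N :=
  (forall a, ~ lvRem S A N a) /\ (forall k, k < N -> exists a, lvRem S A k a).

(* A_i = D^(N+1-i), for 1 <= i <= N *)
Definition Alevel S A N i : vset d := Dlevel S A (N - i).

Definition compl S E : vset d := fun a => S a /\ ~ E a.

Definition well_behaved S E :=
  forall a r (bs : 'I_r -> vec d) (G : 'I_r -> {set 'I_d}),
    S a -> complete_infimum S S a bs ->
    (forall j, Deltat S (G j) a (bs j)) ->
    (forall j b, Deltat S (G j) a b -> compl S E b) ->
    E a.

End GoodSemigroups.

From mathcomp Require Import all_boot.
From Stdlib Require Import Classical.
Set Implicit Arguments. Unset Strict Implicit. Unset Printing Implicit Defensive.

(* Number the levels from the top: level 0 consists of the maximal elements of
   A, and write L_k for level k and R_k for A minus the levels above k.  The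
   hypothesis says that every element of L_(k+1) lies strictly below (<<) an
   element of L_k.  Hence no element of R_k is a complete infimum of maximal
   elements of R_k (it would fall to a lower level, and then lie strictly below
   an element of R_k), and if x <= y then y lies in the level of x or above.
   Let a in L_K be a complete infimum of b_j in the faces Delta_(F_j)(a).  Key
   claim: if g is in L_k, a << g, and c <= g lies in Delta_F(a), then c is not
   in L_k.  Otherwise, for every s where c and g agree, (G2) (for k > 0 cut down
   by an element of L_(k-1) above g, using the claim for k-1) yields an element
   of L_k above c, equal to c wherever c < g and raised at s.  Those whose raised
   sets are inclusion-minimal have equal or disjoint raised sets, so together
   with g they exhibit c as a complete infimum in L_k: impossible.  For K > 0,
   meeting the b_j with an element of L_(K-1) above a moves them into L_K by the
   claim, and they then exhibit a as a complete infimum in L_K: impossible. *)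

Lemma ex_minimizer (T : Type) (m : T -> nat) (P : T -> Prop) :
  (exists x, P x) -> exists x, P x /\ forall y, P y -> m x <= m y.
Proof.
move=> [x0 Px0].
suff min_below n x : m x < n -> P x -> exists x, P x /\ forall y, P y -> m x <= m y.
  exact: min_below (ltnSn _) Px0.
elim: n x => // n IH x lt_xn Px.
case: (classic (exists y, P y /\ m y < m x)) => [[y [Py lt_yx]]|min_x].
  exact: IH (leq_trans lt_yx lt_xn) Py.
exists x; split=> // y Py; rewrite leqNgt; apply/negP => lt_yx.
by apply: min_x; exists y.
Qed.

Section Vectors.
Variable d : nat.
Implicit Types (S B : vset d) (x y z a : vec d).

Lemma vmeet_eq x y z : vle x y -> vle x z ->
  (forall i, y i = x i \/ z i = x i) -> vmeet y z = x.
Proof.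
move=> le_xy le_xz yz; apply/ffunP => i; rewrite ffunE.
by case: (yz i) => ->; [exact/minn_idPl | exact/minn_idPr].
Qed.

Lemma vmeetC x y : vmeet x y = vmeet y x.
Proof. by apply/ffunP => i; rewrite !ffunE minnC. Qed.

Lemma Delta_vle S F a y : Delta S F a y -> vle a y.
Proof. by move=> [_ [eqF ltF]] i; case: (boolP (i \in F)) => [/eqF ->|/ltF/ltnW]. Qed.

Lemma Delta_vmeet_eq S F F' a y z y' z' :
  Delta S F a y -> Delta S F' a z -> Delta S F a y' -> Delta S F' a z' ->
  vmeet y z = a -> vmeet y' z' = a.
Proof.
move=> [_ [_ ltF]] [_ [_ ltF']] Dy' Dz' meet_yz.
apply: vmeet_eq; [exact: Delta_vle Dy' | exact: Delta_vle Dz' |] => i.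
case: Dy' Dz' => _ [eqF _] [_ [eqF' _]].
case: (boolP (i \in F)) => [/eqF ->|iF]; first by left.
case: (boolP (i \in F')) => [/eqF' ->|iF']; first by right.
have : a i < vmeet y z i by rewrite ffunE leq_min ltF ?ltF'.
by rewrite meet_yz ltnn.
Qed.

Lemma G2_above S c z s : G2 S -> S c -> S z -> vle c z -> c <> z -> c s = z s ->
  exists e, [/\ S e, vle c e, c s < e s & forall j, c j < z j -> e j = c j].
Proof.
move=> S_G2 Sc Sz le_cz neq_cz eq_s.
have [e [Se [lt_s He]]] := S_G2 _ _ Sc Sz neq_cz s eq_s.
have min_c j : minn (c j) (z j) = c j by exact/minn_idPl.
exists e; split=> // [j|j lt_j].
  case: (eqVneq j s) => [->|/eqP neq_js]; first exact: ltnW.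
  by have [+ _] := He j neq_js; rewrite min_c.
have neq_js : j <> s by move=> eq_js; rewrite eq_js eq_s ltnn in lt_j.
by have [_ ->] := He j neq_js; rewrite ?min_c // => eq_j; rewrite eq_j ltnn in lt_j.
Qed.

Lemma Delta_sub_Deltat S F G a b y : Deltat S G a b -> Delta S F a b -> F != setT ->
  Delta S F a y -> Deltat S G a y.
Proof.
move=> [_ eqG _ _] [_ [_ ltF]].
rewrite eqEsubset subsetT /= => /subsetPn [j _ jF] [Sy [eqF ltF']].
have GF i : i \in G -> i \in F.
  move=> iG; apply/negPn/negP => /ltF; by rewrite eqG // ltnn.
split=> // [i /GF/eqF //|i _|eq_ya].
  by case: (boolP (i \in F)) => [/eqF ->|/ltF'/ltnW].
by have := ltF' j jF; rewrite eq_ya ltnn.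
Qed.

Lemma complete_infimum_of_family S B x (T : finType) (f : T -> vec d) :
  0 < d -> B x -> (forall t, B (f t)) -> (forall t, S (f t)) ->
  (forall t, vle x (f t)) -> (forall t, exists i, f t i = x i) ->
  (forall t u, f t = f u \/ vmeet (f t) (f u) = x) ->
  (forall i, exists t, x i < f t i) ->
  exists r (bs : 'I_r -> vec d), 1 < r <= d /\ complete_infimum S B x bs.
Proof.
move=> d_gt0 Bx Bf Sf le_xf eq_xf meet_f /fin_all_exists [p lt_xp].
pose s := undup [seq f (p i) | i <- enum 'I_d].
have s_uniq : uniq s := undup_uniq _.
have fp_s i : f (p i) \in s by rewrite mem_undup map_f ?mem_enum.
have nth_s (j : 'I_(size s)) : exists i, nth x s j = f (p i).
  by move: (mem_nth x (ltn_ord j)); rewrite mem_undup => /mapP [i _ ->]; exists i.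
have size_s : 1 < size s.
  have [i1 eq_i1] := eq_xf (p (Ordinal d_gt0)).
  have neq : f (p (Ordinal d_gt0)) != f (p i1).
    by apply/eqP => eq01; have := lt_xp i1; rewrite -eq01 eq_i1 ltnn.
  apply: (uniq_leq_size (s1 := [:: f (p (Ordinal d_gt0)); f (p i1)])).
    by rewrite /= inE neq.
  by move=> y; rewrite !inE => /orP [] /eqP ->.
exists (size s), (fun j => nth x s j); split.
  by rewrite size_s (leq_trans (size_undup _)) // size_map size_enum_ord.
split=> // [j|]; first by have [i ->] := nth_s j.
exists (fun j => [set i | nth x s j i == x i]); split.
- move=> j; have [i ->] := nth_s j; split.
    by have [i' eq'] := eq_xf (p i); apply/set0Pn; exists i'; rewrite inE eq'.
  by apply/eqP => /setP/(_ i); rewrite !inE gtn_eqF ?lt_xp.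
- move=> j; have [i ->] := nth_s j; split=> //; split=> l; rewrite inE; first by move/eqP.
  by rewrite ltn_neqAle eq_sym => ->; rewrite le_xf.
- move=> j k neq_jk; have [i ei] := nth_s j; have [i' ei'] := nth_s k.
  have : nth x s j != nth x s k.
    by rewrite nth_uniq //; apply/eqP => /val_inj.
  by rewrite ei ei'; case: (meet_f (p i) (p i')) => [->|//]; rewrite eqxx.
- apply/setP => i; rewrite in_set0; apply/negP => /bigcapP in_all.
  have lt_j : index (f (p i)) s < size s by rewrite index_mem.
  by have := in_all (Ordinal lt_j) isT; rewrite inE /= nth_index // gtn_eqF ?lt_xp.
Qed.

Lemma complete_infimum_of_faces S B a r (bs cs : 'I_r -> vec d)
    (F : 'I_r -> {set 'I_d}) :
  0 < d -> B a -> (forall j, F j != set0) -> (forall j, Delta S (F j) a (bs j)) ->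
  (forall j k, j <> k -> vmeet (bs j) (bs k) = a) -> \bigcap_(j < r) F j = set0 ->
  (forall j, Delta S (F j) a (cs j) /\ B (cs j)) ->
  exists r' (bs' : 'I_r' -> vec d), 1 < r' <= d /\ complete_infimum S B a bs'.
Proof.
move=> d_gt0 Ba F_ne Dbs meet_bs capF Dcs.
apply: (complete_infimum_of_family (f := cs)) => // [j|j|j|j|j k|i].
- by case: (Dcs j).
- by case: (Dcs j) => [[]].
- by case: (Dcs j) => /Delta_vle.
- have /set0Pn [i iF] := F_ne j; exists i.
  by case: (Dcs j) => [[_ [-> ]]].
- case: (eqVneq j k) => [->|/eqP neq_jk]; [by left | right].
  have [[Dj _] [Dk _]] := (Dcs j, Dcs k).
  exact: Delta_vmeet_eq (Dbs j) (Dbs k) Dj Dk (meet_bs j k neq_jk).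
- apply: NNPP => no_j.
  have : i \in \bigcap_(j < r) F j.
    apply/bigcapP => j _; apply/negPn/negP => iF; apply: no_j; exists j.
    by case: (Dcs j) => [[_ [_ ->]]].
  by rewrite capF in_set0.
Qed.

End Vectors.

Section Candidates.
Variables (d : nat) (S B : vset d) (c g : vec d).
Hypotheses (S_G1 : G1 S) (S_G2 : G2 S) (B_S : forall y, B y -> S y).
Hypotheses (Bc : B c) (Bg : B g) (le_cg : vle c g).
Variable i0 : 'I_d.
Hypotheses (lt_cg_i0 : c i0 < g i0) (eq_cg : exists s, c s = g s).
Implicit Types y z w : vec d.

Definition candidate y := [/\ B y, vle c y & forall j, c j < g j -> y j = c j].
Definition raised y := [set i | c i < y i].
Definition minimal_candidate y := [/\ candidate y, raised y != set0 &
  forall z, candidate z -> raised z \proper raised y -> raised z = set0].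

Hypothesis B_convex : forall z w, S z -> vle c z -> vle z w -> candidate w -> B z.
Hypothesis candidate_raising :
  forall s, c s = g s -> exists y, candidate y /\ s \in raised y.

Lemma candidate_below z w : S z -> vle c z -> vle z w -> candidate w -> candidate z.
Proof.
move=> Sz le_cz le_zw cw; split=> // [|j lt_j]; first exact: B_convex cw.
have [_ _ /(_ j lt_j) eq_w] := cw.
by apply/eqP; rewrite eqn_leq le_cz andbT -eq_w le_zw.
Qed.

(* Meet [y] with the element given by (G2) for [c] and [z] at [s]: it equals
   [c] wherever [z] is raised, but is still raised at [s]. *)
Lemma candidate_shrink y z s l : candidate y -> candidate z ->
  s \in raised y -> s \notin raised z -> l \in raised y -> l \in raised z ->
  exists y', [/\ candidate y', s \in raised y' & raised y' \proper raised y].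
Proof.
move=> cy [Bz le_cz _] sy sz ly lz; have [By le_cy _] := cy.
have eq_s : c s = z s by apply/eqP; rewrite eqn_leq le_cz; rewrite inE -leqNgt in sz.
have neq_cz : c <> z by move=> eq_cz; rewrite inE -eq_cz ltnn in lz.
have [e [Se le_ce lt_s fix_e]] := G2_above S_G2 (B_S Bc) (B_S Bz) le_cz neq_cz eq_s.
exists (vmeet y e); split.
- apply: (candidate_below (w := y)) cy => [|j|j]; rewrite ?ffunE.
  + exact: S_G1 (B_S By) Se.
  + by rewrite leq_min le_cy le_ce.
  + exact: geq_minl.
- by move: sy; rewrite !inE ffunE leq_min lt_s andbT.
- apply: sub_proper_trans (properD1 ly); apply/subsetP => j.
  rewrite !inE ffunE leq_min => /andP [lt_yj lt_ej]; rewrite lt_yj andbT.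
  have lt_zl : c l < z l by rewrite inE in lz.
  by apply: contraTneq lt_ej => ->; rewrite fix_e ?ltnn.
Qed.

Lemma minimal_raised_sub y z l : minimal_candidate y -> candidate z ->
  l \in raised y -> l \in raised z -> raised y \subset raised z.
Proof.
move=> [cy _ min_y] cz ly lz; apply/subsetP => s sy; apply/negPn/negP => sz.
have [y' [cy' sy' lt_y']] := candidate_shrink cy cz sy sz ly lz.
by rewrite (min_y y' cy' lt_y') in_set0 in sy'.
Qed.

Lemma exists_minimal_candidate s : c s = g s ->
  exists y, minimal_candidate y /\ s \in raised y.
Proof.
move=> /candidate_raising raising.
have [y [[cy sy] min_y]] := ex_minimizer (fun y : vec d => #|raised y|) raising.
exists y; split=> //; split=> //; first by apply/set0Pn; exists s.
move=> z cz lt_zy; apply/eqP/negPn/negP => /set0Pn [l lz].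
have ly : l \in raised y := subsetP (proper_sub lt_zy) l lz.
have [y' [cy' sy' lt_y']] :
    exists y', [/\ candidate y', s \in raised y' & raised y' \proper raised y].
  case: (boolP (s \in raised z)) => sz; first by exists z.
  exact: candidate_shrink cy cz sy sz ly lz.
by have := min_y y' (conj cy' sy'); rewrite leqNgt proper_card.
Qed.

Lemma unraised y i : vle c y -> i \notin raised y -> y i = c i.
Proof.
by move=> le_cy; rewrite inE -leqNgt => le_yc; apply/eqP; rewrite eqn_leq le_yc le_cy.
Qed.

Lemma candidate_vmeet_g y : candidate y -> vmeet y g = c.
Proof.
move=> [_ le_cy fix_y]; apply: vmeet_eq => // i.
case: (ltnP (c i) (g i)) => [/fix_y|le_gc]; first by left.
by right; apply/eqP; rewrite eqn_leq le_gc le_cg.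
Qed.

Lemma minimal_candidate_vmeet y z : minimal_candidate y -> minimal_candidate z ->
  raised y != raised z -> vmeet y z = c.
Proof.
move=> my mz neq_yz; have [cy _ _] := my; have [cz _ _] := mz.
have [[_ le_cy _] [_ le_cz _]] := (cy, cz).
apply: vmeet_eq => // i.
case: (boolP (i \in raised y)) => iy; last by left; apply: unraised.
case: (boolP (i \in raised z)) => iz; last by right; apply: unraised.
move: neq_yz; rewrite eqEsubset.
by rewrite (minimal_raised_sub my cz iy iz) (minimal_raised_sub mz cy iz iy).
Qed.

(* One minimal candidate for each possible raised set, [g] standing in when
   there is none: distinct members of this family meet exactly in [c]. *)
Lemma candidates_complete_infimum :
  exists r (bs : 'I_r -> vec d), 1 < r <= d /\ complete_infimum S B c bs.
Proof.
have Z_ex (A : {set 'I_d}) : exists z,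
    (minimal_candidate z /\ raised z = A) \/
    (z = g /\ ~ exists y, minimal_candidate y /\ raised y = A).
  case: (classic (exists y, minimal_candidate y /\ raised y = A)) => [[y ?]|?].
    by exists y; left.
  by exists g; right.
have [Z Z_spec] := fin_all_exists Z_ex.
apply: (@complete_infimum_of_family d S B c _ Z) => [||A|A|A|A|A A'|i] //.
- exact: leq_ltn_trans (leq0n i0) (ltn_ord i0).
- by case: (Z_spec A) => [[[[]]]|[->]].
- by case: (Z_spec A) => [[[[/B_S]]]|[-> _]]; last exact: B_S.
- by case: (Z_spec A) => [[[[]]]|[-> _]].
- case: (Z_spec A) => [[[[_ _ fix_Z] _ _] _]|[-> _]]; first by exists i0; apply: fix_Z.
  by have [s eq_s] := eq_cg; exists s.
- case: (Z_spec A) (Z_spec A') => [[mZ eqA]|[-> _]] [[mZ' eqA']|[-> _]];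
    [|right..|by left].
  + case: (eqVneq A A') => [->|neq_AA']; first by left.
    by right; apply: minimal_candidate_vmeet; rewrite ?eqA ?eqA'.
  + by case: mZ => cZ _ _; apply: candidate_vmeet_g.
  + by case: mZ' => cZ _ _; rewrite vmeetC; apply: candidate_vmeet_g.
- case: (ltnP (c i) (g i)) => [lt_i|le_gc].
    exists set0; case: (Z_spec set0) => [[[_ + _] raised0]|[-> _] //].
    by rewrite raised0 eqxx.
  have /exists_minimal_candidate [y [my iy]] : c i = g i.
    by apply/eqP; rewrite eqn_leq le_gc le_cg.
  exists (raised y).
  case: (Z_spec (raised y)) => [[_ eq_raised]|[_ []]]; last by exists y.
  by rewrite -eq_raised inE in iy.
Qed.

End Candidates.

Section Levels.
Variables (d : nat) (S A : vset d) (N : nat).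
Hypotheses (d_gt0 : 0 < d) (A_levels : num_levels S A N).
Local Notation R := (lvRem S A).
Local Notation L := (Dlevel S A).
Implicit Types x y z : vec d.

Lemma lvRem_le j k x : j <= k -> R k x -> R j x.
Proof.
elim: k => [|k IH]; first by rewrite leqn0 => /eqP ->.
by rewrite leq_eqVlt ltnS => /orP [/eqP -> //|le_jk [Rx _]]; exact: IH.
Qed.

Lemma Dlevel_lvRem k x : L k x -> R k x.
Proof. by case=> [[]]. Qed.

Lemma Dlevel_sub k x : L k x -> A x.
Proof. by move/Dlevel_lvRem/(lvRem_le (leq0n k)). Qed.

Lemma exists_Dlevel x : A x -> exists k, L k x.
Proof.
move=> Ax; apply: NNPP => no_level.
have Rx k : R k x by elim: k => // k Rx; split=> // Lx; apply: no_level; exists k.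
by case: A_levels => /(_ x).
Qed.

Lemma vll_neq x y : vll x y -> y <> x.
Proof. by move=> lt_xy eq_yx; have := lt_xy (Ordinal d_gt0); rewrite eq_yx ltnn. Qed.

Lemma Dlevel_vll kx ky x y : L kx x -> L ky y -> vll x y -> ky < kx.
Proof.
move=> [[_ max_x] _] Ly lt_xy; case: (ltnP ky kx) => // le_kxy; case: max_x.
exists y; split; first exact: lvRem_le le_kxy (Dlevel_lvRem Ly).
by split; [right | exact: vll_neq].
Qed.

Hypothesis Dlevel_up : forall k x, L k.+1 x -> exists y, L k y /\ vll x y.

(* A complete infimum in [R k] drops to a lower level, from which [Dlevel_up]
   climbs back to an element of [R k] strictly above it. *)
Lemma lvC_lvRem k x : ~ lvC S (R k) x.
Proof.
move=> Cx; have [[Rx max_x] _] := Cx.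
have Rx' : R k.+1 x by split=> // [[_]].
have [k' Lx] := exists_Dlevel (lvRem_le (leq0n _) Rx').
have : k < k'.
  rewrite ltnNge; apply/negP => le_k'k.
  by have [_ []] := lvRem_le (j := k'.+1) (k := k.+1) le_k'k Rx'.
case: k' Lx => // k' Lx lt_kk'; have [y [Ly lt_xy]] := Dlevel_up Lx.
have Ry : R k y := lvRem_le (k := k') lt_kk' (Dlevel_lvRem Ly).
by case: max_x; exists y; split=> //; split; [right | exact: vll_neq].
Qed.

Lemma Dlevel_vle kx ky x y : vle x y -> L kx x -> L ky y -> ky <= kx.
Proof.
move=> le_xy [[_ max_x] _] Ly; rewrite leqNgt; apply/negP => lt_kxy.
have [Ry notD] : R kx.+1 y := lvRem_le lt_kxy (Dlevel_lvRem Ly).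
have [z [Rz [[eq_yz|lt_yz] neq_zy]]] : exists z, R kx z /\ vlele y z /\ z <> y.
- by apply: NNPP => no_z; apply: notD; split; [split | exact: lvC_lvRem].
- by rewrite eq_yz in neq_zy.
have lt_xz : vll x z := fun i => leq_ltn_trans (le_xy i) (lt_yz i).
by case: max_x; exists z; split=> //; split; [right | exact: vll_neq].
Qed.

Lemma Dlevel_between k x y z : A z -> vle x z -> vle z y -> L k x -> L k y -> L k z.
Proof.
move=> Az le_xz le_zy Lx Ly; have [kz Lz] := exists_Dlevel Az.
suff -> : k = kz by [].
by apply/eqP; rewrite eqn_leq (Dlevel_vle le_xz Lx Lz) (Dlevel_vle le_zy Lz Ly).
Qed.

Lemma Dlevel_between_succ k x y z : A z -> vle x z -> vle z y ->
  L k.+1 x -> L k y -> ~ L k z -> L k.+1 z.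
Proof.
move=> Az le_xz le_zy Lx Ly not_Lz; have [kz Lz] := exists_Dlevel Az.
suff -> : k.+1 = kz by [].
have neq_kz : k != kz by apply/eqP => eq_kz; apply: not_Lz; rewrite eq_kz.
apply/eqP; rewrite eqn_leq (Dlevel_vle le_xz Lx Lz) andbT ltn_neqAle neq_kz.
exact: Dlevel_vle le_zy Lz Ly.
Qed.

Lemma Dlevel_no_complete_infimum k x r (bs : 'I_r -> vec d) :
  1 < r <= d -> ~ complete_infimum S (L k) x bs.
Proof.
move=> r_bounds [r_ge2 [Bx _] Lbs ci]; apply: (@lvC_lvRem k x); split=> //.
by exists r, bs; split=> //; split=> // j; case: (Lbs j).
Qed.

Section Face.
Hypotheses (S_G1 : G1 S) (S_G2 : G2 S) (A_S : forall x, A x -> S x).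
Variables (a : vec d) (F : {set 'I_d}) (i0 : 'I_d).
Hypotheses (i0F : i0 \in F) (Delta_A : forall y, Delta S F a y -> A y).

Lemma Dlevel_S k x : L k x -> S x.
Proof. by move/Dlevel_sub/A_S. Qed.

Lemma Delta_fixed c g y : vll a g -> Delta S F a c -> vle c g ->
  S y -> vle c y -> (forall j, c j < g j -> y j = c j) -> Delta S F a y.
Proof.
move=> lt_ag [_ [eqF ltF]] le_cg Sy le_cy fix_y; split=> //; split=> [i iF|j jF].
  have lt_cg : c i < g i by rewrite eqF //; exact: lt_ag.
  by rewrite fix_y // eqF.
exact: leq_trans (ltF j jF) (le_cy j).
Qed.

Lemma Delta_vmeet b g : Delta S F a b -> vll a g -> S g -> Delta S F a (vmeet b g).
Proof.
move=> [Sb [eqF ltF]] lt_ag Sg; split; first exact: S_G1.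
split=> [i iF|j jF]; rewrite ffunE.
  by rewrite eqF //; apply/minn_idPl/ltnW.
by rewrite leq_min ltF //; exact: lt_ag.
Qed.

Lemma Delta_G2_above c g s : vll a g -> Delta S F a c -> vle c g -> S g -> c s = g s ->
  exists e, [/\ Delta S F a e, vle c e, c s < e s & forall j, c j < g j -> e j = c j].
Proof.
move=> lt_ag Dc le_cg Sg eq_s; have [Sc [eqF _]] := Dc.
have neq_cg : c <> g by move=> eq_cg; have := lt_ag i0; rewrite -eq_cg eqF ?ltnn.
have [e [Se le_ce lt_s fix_e]] := G2_above S_G2 Sc Sg le_cg neq_cg eq_s.
by exists e; split=> //; exact: Delta_fixed lt_ag Dc le_cg Se le_ce fix_e.
Qed.

(* If [c] shared the level [k] of [g], the candidates above [c] inside that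
   level would exhibit [c] as a complete infimum there. *)
Lemma Dlevel_not_all_raised k g c : L k g -> vll a g -> Delta S F a c ->
  vle c g -> L k c ->
  ~ (forall s, c s = g s -> exists y, candidate (L k) c g y /\ s \in raised c y).
Proof.
move=> Lg lt_ag Dc le_cg Lc raising.
have lt_cg_i0 : c i0 < g i0 by case: Dc => _ [-> //]; exact: lt_ag.
have eq_cg : exists s, c s = g s.
  apply: NNPP => neq_cg; suff /(Dlevel_vll Lc Lg) : vll c g by rewrite ltnn.
  move=> i; rewrite ltn_neqAle le_cg andbT.
  by apply/eqP => eq_i; apply: neq_cg; exists i.
have convex z w : S z -> vle c z -> vle z w -> candidate (L k) c g w -> L k z.
  move=> Sz le_cz le_zw [Lw le_cw fix_w].
  have fix_z j : c j < g j -> z j = c j.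
    by move/fix_w => eq_w; apply/eqP; rewrite eqn_leq le_cz andbT -eq_w le_zw.
  have Az := Delta_A (Delta_fixed lt_ag Dc le_cg Sz le_cz fix_z).
  exact: Dlevel_between Az le_cz le_zw Lc Lw.
have [r [bs [r_bounds ci]]] := @candidates_complete_infimum d S (L k) c g
  S_G1 S_G2 (@Dlevel_S k) Lc Lg le_cg i0 lt_cg_i0 eq_cg convex raising.
exact: Dlevel_no_complete_infimum r_bounds ci.
Qed.

Lemma Delta_below_not_Dlevel k g c :
  L k g -> vll a g -> Delta S F a c -> vle c g -> ~ L k c.
Proof.
elim: k g c => [|k IH] g c Lg lt_ag Dc le_cg Lc;
  apply: (Dlevel_not_all_raised Lg lt_ag Dc le_cg Lc) => s eq_s;
  have [e [De le_ce lt_s fix_e]] :=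
    Delta_G2_above lt_ag Dc le_cg (Dlevel_S Lg) eq_s.
- have [ke Le] := exists_Dlevel (Delta_A De).
  move: (Dlevel_vle le_ce Lc Le); rewrite leqn0 => /eqP eq_ke.
  by exists e; split; [split; rewrite -?eq_ke | rewrite inE].
- have [g' [Lg' lt_gg']] := Dlevel_up Lg.
  have le_cg' : vle c g' := fun j => ltnW (leq_ltn_trans (le_cg j) (lt_gg' j)).
  have lt_ag' : vll a g' := fun j => ltn_trans (lt_ag j) (lt_gg' j).
  pose y := vmeet e g'.
  have le_cy : vle c y by move=> j; rewrite ffunE leq_min le_ce le_cg'.
  have le_yg' : vle y g' by move=> j; rewrite ffunE geq_minr.
  have fix_y j : c j < g j -> y j = c j.
    by move/fix_e => eq_e; rewrite ffunE eq_e; exact/minn_idPl/le_cg'.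
  have [Se _] := De.
  have Dy := Delta_fixed lt_ag Dc le_cg (S_G1 Se (Dlevel_S Lg')) le_cy fix_y.
  have not_Ly := IH g' y Lg' lt_ag' Dy le_yg'.
  have Ly := Dlevel_between_succ (Delta_A Dy) le_cy le_yg' Lc Lg' not_Ly.
  exists y; split; first by split.
  by rewrite inE ffunE leq_min lt_s eq_s; exact: lt_gg'.
Qed.

Lemma exists_Delta_Dlevel K b : L K a -> Delta S F a b ->
  exists c, Delta S F a c /\ L K c.
Proof.
move=> La Db; case: K La => [|K] La.
  exists b; split=> //; have [kb Lb] := exists_Dlevel (Delta_A Db).
  by move: (Dlevel_vle (Delta_vle Db) La Lb); rewrite leqn0 => /eqP <-.
have [g [Lg lt_ag]] := Dlevel_up La.
have Dc := Delta_vmeet Db lt_ag (Dlevel_S Lg).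
have le_cg : vle (vmeet b g) g by move=> j; rewrite ffunE geq_minr.
have not_Lc := Delta_below_not_Dlevel Lg lt_ag Dc le_cg.
exists (vmeet b g); split=> //.
exact: Dlevel_between_succ (Delta_A Dc) (Delta_vle Dc) le_cg La Lg not_Lc.
Qed.

End Face.

End Levels.

Lemma Dlevel_up_of_Alevel_up d (S A : vset d) N : num_levels S A N ->
  (forall i, 1 <= i -> i <= N - 1 -> forall a, Alevel S A N i a ->
     exists b, Alevel S A N i.+1 b /\ vll a b) ->
  forall k x, Dlevel S A k.+1 x -> exists y, Dlevel S A k y /\ vll x y.
Proof.
move=> [no_rem _] Alevel_up k x Lx.
have lt_kN : k.+1 < N.
  rewrite ltnNge; apply/negP => le_Nk.
  exact: no_rem x (lvRem_le le_Nk (Dlevel_lvRem Lx)).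
have eq_i : N - (N - k.+1) = k.+1 by rewrite subKn // ltnW.
have eq_iS : N - (N - k.+1).+1 = k by rewrite subnSK 1?ltnW // subKn 1?ltnW // ltnW.
have := Alevel_up (N - k.+1) _ _ x; rewrite /Alevel eq_i eq_iS.
by apply; [rewrite subn_gt0 | exact: leq_sub2l |].
Qed.

Theorem proposition5p3 (d : nat) (S E : vset d) (N : nat) :
  good_semigroup S -> good_ideal S E ->
  (exists s, S s /\ ~ E s) ->
  num_levels S (compl S E) N ->
  (forall i, 1 <= i -> i <= N - 1 ->
     forall a, Alevel S (compl S E) N i a ->
       exists b, Alevel S (compl S E) N i.+1 b /\ vll a b) ->
  well_behaved S E.
Proof.
(* Only (G1) and (G2) for [S] are needed; of [E], only that [A] is [S] minus [E]. *)
move=> [_ _ S_G1 S_G2 _] _ _ levels Alevel_up a r bs G Sa ci_bs Deltat_bs Deltat_A.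
have [r_ge2 _ _ [F [F_proper Delta_bs meet_bs capF]]] := ci_bs.
have F_ne j : F j != set0 by case: (F_proper j).
have /set0Pn [i0 _] := F_ne (Ordinal (ltnW r_ge2)).
have d_gt0 : 0 < d := leq_ltn_trans (leq0n i0) (ltn_ord i0).
have up := Dlevel_up_of_Alevel_up levels Alevel_up.
have A_S x : compl S E x -> S x by case.
have Delta_A j y : Delta S (F j) a y -> compl S E y.
  case: (F_proper j) => _ FT Dy.
  exact: Deltat_A j y (Delta_sub_Deltat (Deltat_bs j) (Delta_bs j) FT Dy).
apply: NNPP => Ea; have [K La] := exists_Dlevel levels (conj Sa Ea).
have cs_ex j : exists c, Delta S (F j) a c /\ Dlevel S (compl S E) K c.
  have /set0Pn [i iF] := F_ne j.
  exact: (exists_Delta_Dlevel d_gt0 levels up S_G1 S_G2 A_S iF (Delta_A j) La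
           (Delta_bs j)).
have [cs Dcs] := fin_all_exists cs_ex.
have [r' [bs' [r'_bounds ci]]] :=
  complete_infimum_of_faces d_gt0 La F_ne Delta_bs meet_bs capF Dcs.
exact: (Dlevel_no_complete_infimum d_gt0 levels up r'_bounds ci).
Qed.
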